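(* Let $n=p_1^{m_1}\cdots p_k^{m_k}$ with $m_i>1$ for at least one $i$. Then: (1) The Laplacian spectrum of $\mathcal E_{\mathbb Z_n}(\mathscr U)$ consists of $N_I$ with multiplicity $n_I-1=\prod_{i\notin\Xi_I}m_i-1$ for each $I\in V(\mathscr G)$ with $n_I>1$, together with the $2^k-2$ eigenvalues of the symmetric matrix $C_L(\mathscr G)$ indexed by $V(\mathscr G)$ with $(C_L)_{II}=N_I$, $(C_L)_{IJ}=-\sqrt{n_In_J}$ if $I\sim J$ in $\mathscr G$, $0$ otherwise. (2) The signless Laplacian spectrum of $\mathcal E_{\mathbb Z_n}(\mathscr U)$ consists of $N_I$ with multiplicity $n_I-1$ for each $I\in V(\mathscr G)$, together with the eigenvalues of the matrix $C_Q(\mathscr G)$ with $(C_Q)_{II}=N_I$, $(C_Q)_{IJ}=\sqrt{n_In_J}$ if $I\sim J$ in $\mathscr G$, $0$ otherwise. (3) The normalized Laplacian spectrum of $\mathcal E_{\mathbb Z_n}(\mathscr U)$ consists of $1$ with multiplicity $\sum_{I\in V(\mathscr G)}(n_I-1)$, together with the eigenvalues of the matrix $C_{\mathscr L}(\mathscr G)$ with $(C_{\mathscr L})_{II}=1$, $(C_{\mathscr L})_{IJ}=-\sqrt{\frac{n_In_J}{N_IN_J}}$ if $I\sim J$ in $\mathscr G$, $0$ otherwise.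
   Context: Primes $p_1<\dots<p_k$, positive integers $m_i$. Nonzero proper ideals of $\mathbb Z_n$ are uniquely $\langle p_1^{r_1}\cdots p_k^{r_k}\rangle$, $0\le r_i\le m_i$, $(r_i)\ne(0,\dots,0),(m_1,\dots,m_k)$; essential iff $r_j\ne m_j$ for all $j$. Essential ideal graph $\mathcal E_{\mathbb Z_n}$: vertices nonzero proper ideals, distinct $I,K$ adjacent iff $I+K$ essential. $\mathscr U$ = nonzero proper nonessential ideals, $\mathcal E_{\mathbb Z_n}(\mathscr U)$ the induced subgraph. $\Xi_I=\{i:r_i=m_i\}$; $[I]=\{J\in\mathscr U:\Xi_J=\Xi_I\}$. $\mathscr G$: vertex set the $2^k-2$ ideals $\langle\prod_{i\in S}p_i^{m_i}\rangle$, $S$ nonempty proper subset of $\{1,\dots,k\}$, $I\sim J$ iff $\Xi_I\cap\Xi_J=\emptyset$. $n_I=|[I]|=\prod_{i\notin\Xi_I}m_i$ and $N_I=\sum_{J\in V(\mathscr G),\,\Xi_I\cap\Xi_J=\emptyset}n_J$. For a graph with adjacency matrix $A$ and degree matrix $D$: Laplacian $L=D-A$, signless Laplacian $Q=D+A$, normalized Laplacian $\mathscr L=D^{-1/2}LD^{-1/2}$. *)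

From HB Require Import structures.
From mathcomp Require Import all_boot all_order all_algebra.
Set Implicit Arguments. Unset Strict Implicit. Unset Printing Implicit Defensive.
Import Order.TTheory GRing.Theory Num.Theory.
Local Open Scope ring_scope.

(* Matrices are indexed by 'I_#|V| via
   enum_val (any ordering of V; characteristic polynomials do not depend on it). *)
Section GraphMatrices.
Variables (R : rcfType) (T : finType) (V : {set T}) (adj : rel T).

Definition vtx (i : 'I_#|V|) : T := enum_val i.

Definition adjmx : 'M[R]_#|V| := \matrix_(i, j) (adj (vtx i) (vtx j))%:R.

Definition deg (i : 'I_#|V|) : R := \sum_j adjmx i j.

Definition degmx : 'M[R]_#|V| := \matrix_(i, j) ((i == j)%:R * deg i).

Definition lapmx : 'M[R]_#|V| := degmx - adjmx.
Definition slapmx : 'M[R]_#|V| := degmx + adjmx.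

Definition degmx_isqrt : 'M[R]_#|V| :=
  \matrix_(i, j) ((i == j)%:R * (Num.sqrt (deg i))^-1).

Definition nlapmx : 'M[R]_#|V| := degmx_isqrt *m lapmx *m degmx_isqrt.
End GraphMatrices.

(* ---------- Ideals of Z_n, n = p_1^{m_1} ... p_k^{m_k} ----------
   By the context, ideals of Z_n are uniquely <p_1^{r_1}...p_k^{r_k}>,
   0 <= r_i <= m_i; we represent an ideal by its exponent vector r. *)
Section Ideals.
Variables (k : nat) (m : 'I_k -> nat).

Definition Mx : nat := \max_(i < k) m i.

Definition expv := {ffun 'I_k -> 'I_Mx.+1}.

Definition is_ideal (r : expv) : bool := [forall i, (r i <= m i)%N].

(* nonzero (r <> (m_1,..,m_k)) and proper (r <> (0,..,0)) *)
Definition nonzero_proper (r : expv) : bool :=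
  [&& is_ideal r, ~~ [forall i, (r i : nat) == 0%N]
    & ~~ [forall i, (r i : nat) == m i]].

Definition essential (r : expv) : bool := [forall j, (r j : nat) != m j].

Definition Xi (r : expv) : {set 'I_k} := [set i | (r i : nat) == m i].

(* <d> + <e> = <gcd(d,e)>: componentwise minimum of exponents *)
Definition idsum (r s : expv) : expv :=
  [ffun i => if (r i <= s i)%N then r i else s i].

Definition Uset : {set expv} :=
  [set r | nonzero_proper r && ~~ essential r].

Definition adjE : rel expv := fun r s => (r != s) && essential (idsum r s).

(* V(G): ideals < prod_{i in S} p_i^{m_i} >, S nonempty proper *)
Definition VG : {set expv} :=
  [set r in Uset | [forall i, ((r i : nat) == 0%N) || ((r i : nat) == m i)]].

Definition nI (r : expv) : nat := \prod_(i < k | i \notin Xi r) m i.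

Definition NI (r : expv) : nat :=
  \sum_(J in VG | [disjoint Xi r & Xi J]) nI J.

Definition vG (i : 'I_#|VG|) : expv := enum_val i.

Definition CL (R : rcfType) : 'M[R]_#|VG| :=
  \matrix_(i, j)
    if i == j then (NI (vG i))%:R
    else if [disjoint Xi (vG i) & Xi (vG j)]
         then - Num.sqrt ((nI (vG i))%:R * (nI (vG j))%:R) else 0.

Definition CQ (R : rcfType) : 'M[R]_#|VG| :=
  \matrix_(i, j)
    if i == j then (NI (vG i))%:R
    else if [disjoint Xi (vG i) & Xi (vG j)]
         then Num.sqrt ((nI (vG i))%:R * (nI (vG j))%:R) else 0.

Definition CNL (R : rcfType) : 'M[R]_#|VG| :=
  \matrix_(i, j)
    if i == j then 1
    else if [disjoint Xi (vG i) & Xi (vG j)]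
         then - Num.sqrt (((nI (vG i))%:R * (nI (vG j))%:R)
                          / ((NI (vG i))%:R * (NI (vG j))%:R)) else 0.
End Ideals.

Arguments adjE [k] m _ _.
Arguments NI [k] m r.
Arguments nI [k] m r.
Arguments Xi [k] m r.

(* Two vertices r, s of E_{Z_n}(U) are adjacent iff Xi_r and Xi_s are disjoint,
   so adjacency only depends on the classes [r], [s]: the graph is the G-join
   of the independent sets [I], I in V(G), of sizes n_I, and every vertex of
   [I] has degree N_I.  Hence L, Q and the normalized Laplacian all have the
   shape M = diag(d o cls) + P G P^T, with P the incidence matrix of the
   partition into classes.  For x different from every d_J, the Schur
   complement of x - M, computed with the columns of P scaled to unit length,
   gives det(x - M) = prod_J (x - d_J)^(n_J - 1) * det(x - Q) with
   Q = diag d + sqrt(n) G sqrt(n); two polynomials agreeing outside a finite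
   set of a field of characteristic 0 are equal. *)

From HB Require Import structures.
From mathcomp Require Import all_boot all_order all_algebra zify ring.
Set Implicit Arguments. Unset Strict Implicit. Unset Printing Implicit Defensive.
Import Order.TTheory GRing.Theory Num.Theory.
Local Open Scope ring_scope.

Lemma horner_char_poly (R : comNzRingType) n (A : 'M[R]_n) a :
  (char_poly A).[a] = \det (a%:M - A).
Proof.
rewrite -horner_evalE /char_poly -det_map_mx; congr (\det _).
apply/matrixP => i j; rewrite !mxE /horner_evalE.
by case: (i == j); rewrite rmorphB rmorphMn /= !horner_evalE hornerX hornerC.
Qed.

Lemma poly_horner_eq0 (R : numDomainType) (p : {poly R}) :
  (forall x, p.[x] = 0) -> p = 0.
Proof.
move=> p0; apply: (@roots_geq_poly_eq0 _ p [seq i%:R | i <- iota 0 (size p)]).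
- by apply/allP => x _; apply/rootP.
- by rewrite map_inj_uniq ?iota_uniq // => i j /eqP; rewrite eqr_nat => /eqP.
- by rewrite size_map size_iota.
Qed.

Lemma poly_eq_cofinite (R : numDomainType) (s : seq R) (p q : {poly R}) :
  (forall x, x \notin s -> p.[x] = q.[x]) -> p = q.
Proof.
move=> pq; apply/eqP; rewrite -subr_eq0.
have /eqP : (p - q) * \prod_(a <- s) ('X - a%:P) = 0.
  apply: poly_horner_eq0 => x; rewrite hornerM horner_prod hornerD hornerN.
  have [xs|xNs] := boolP (x \in s); last by rewrite pq // subrr mul0r.
  by rewrite (big_rem x) //= hornerXsubC subrr mul0r mulr0.
by rewrite mulf_eq0 (negPf (monic_neq0 (monic_prod_XsubC _ _ _))) orbF.
Qed.

Lemma det_schur (R : comNzRingType) n p (A A' : 'M[R]_n) (B : 'M[R]_(n, p))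
    (C : 'M[R]_(p, n)) :
  A *m A' = 1%:M -> \det (A - B *m C) = \det A * \det (1%:M - C *m A' *m B).
Proof.
move=> AA'.
have lower : block_mx A B C 1%:M =
    block_mx 1%:M B 0 1%:M *m block_mx (A - B *m C) 0 C 1%:M.
  by rewrite mulmx_block !mul1mx !mul0mx !mulmx1 !add0r subrK.
have upper : block_mx A B C 1%:M =
    block_mx A 0 C 1%:M *m block_mx 1%:M (A' *m B) 0 (1%:M - C *m A' *m B).
  by rewrite mulmx_block !mul1mx !mul0mx !mulmx1 ?addr0 ?add0r mulmxA AA' mul1mx
    mulmxA addrC subrK.
have := congr1 determinant lower; rewrite {1}upper !det_mulmx.
by rewrite det_ublock det_lblock det_lblock det_ublock !det1 !mul1r !mulr1 => ->.
Qed.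

Lemma diag_mxM (R : comNzRingType) n (a b : 'I_n -> R) :
  diag_mx (\row_i a i) *m diag_mx (\row_i b i) = diag_mx (\row_i (a i * b i)).
Proof.
apply/matrixP => i j; rewrite mul_diag_mx !mxE.
by case: (i == j); rewrite ?mulr1n ?mulr0n ?mulr0.
Qed.

Lemma scalar_sub_diag_mx (R : comNzRingType) n (x : R) (a : 'I_n -> R) :
  x%:M - diag_mx (\row_i a i) = diag_mx (\row_i (x - a i)).
Proof.
apply/matrixP => i j; rewrite !mxE.
by case: (i == j); rewrite ?mulr1n ?mulr0n ?subr0.
Qed.

Lemma diag_mx_divff (F : fieldType) n (a : 'I_n -> F) : (forall i, a i != 0) ->
  diag_mx (\row_i a i) *m diag_mx (\row_i (a i)^-1) = 1%:M.
Proof.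
move=> a_neq0; rewrite diag_mxM -diag_const_mx; congr diag_mx.
by apply/rowP => i; rewrite !mxE divff.
Qed.

Lemma diag_mx_mulVf (F : fieldType) n (a : 'I_n -> F) : (forall i, a i != 0) ->
  diag_mx (\row_i (a i)^-1) *m diag_mx (\row_i a i) = 1%:M.
Proof. by move=> a_neq0; rewrite diag_mx_comm diag_mx_divff. Qed.

Section Inflation.
Variables (R : rcfType) (n m : nat) (cls : 'I_n -> 'I_m).

Definition class_size J := #|[pred u | cls u == J]|.

Lemma sum_class (F : 'I_m -> R) :
  \sum_u F (cls u) = \sum_J (class_size J)%:R * F J.
Proof.
rewrite (partition_big cls predT) //=; apply: eq_bigr => J _.
by rewrite (eq_bigr (fun _ => F J)) ?sumr_const ?mulr_natl // => u /eqP ->.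
Qed.

Lemma prod_class (F : 'I_m -> R) :
  \prod_u F (cls u) = \prod_J F J ^+ class_size J.
Proof.
rewrite (partition_big cls predT) //=; apply: eq_bigr => J _.
by rewrite (eq_bigr (fun _ => F J)) ?prodr_const // => u /eqP ->.
Qed.

Definition class_incidence : 'M[R]_(n, m) := rowsub cls 1%:M.
Local Notation P := class_incidence.

Lemma class_incidence_conj (G : 'M[R]_m) : P *m G *m P^T = mxsub cls cls G.
Proof.
by rewrite -rowsubE trmx_mxsub trmx1 -mxsub_mul mulmx1.
Qed.

Lemma class_incidence_diag (a : 'I_m -> R) :
  P^T *m diag_mx (\row_u a (cls u)) *m P =
  diag_mx (\row_J ((class_size J)%:R * a J)).
Proof.
apply/matrixP => I J; rewrite mul_mx_diag !mxE.
under eq_bigr do rewrite !mxE.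
rewrite (sum_class (fun K => (K == I)%:R * a K * (K == J)%:R)).
rewrite (bigD1 I) //= big1 => [|K nK]; last by rewrite (negPf nK) !mul0r mulr0.
by rewrite eqxx mulr1n mul1r addr0 eq_sym; case: (J == I); rewrite ?mulr1 ?mulr0.
Qed.

Hypothesis class_size_gt0 : forall J, (0 < class_size J)%N.
Variables (d : 'I_m -> R) (G : 'M[R]_m).
Local Notation sqrt_size := (\row_J Num.sqrt (class_size J)%:R).

Definition inflate_mx : 'M[R]_n := diag_mx (\row_u d (cls u)) + mxsub cls cls G.

Definition quotient_mx : 'M[R]_m :=
  diag_mx (\row_J d J) + diag_mx sqrt_size *m G *m diag_mx sqrt_size.

Lemma quotient_mxE I J : quotient_mx I J =
  (I == J)%:R * d I
  + Num.sqrt (class_size I)%:R * G I J * Num.sqrt (class_size J)%:R.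
Proof. by rewrite mxE mul_mx_diag mul_diag_mx !mxE mulr_natl. Qed.

Theorem char_poly_inflate :
  char_poly inflate_mx =
  \prod_J ('X - (d J)%:P) ^+ (class_size J - 1) * char_poly quotient_mx.
Proof.
apply: (@poly_eq_cofinite _ [seq d J | J <- enum 'I_m]) => x xNd.
have xd_neq0 J : x - d J != 0.
  by rewrite subr_eq0; apply: contra xNd => /eqP ->; rewrite map_f ?mem_enum.
pose s J := Num.sqrt (class_size J)%:R : R.
have s_neq0 J : s J != 0 by rewrite sqrtr_eq0 -ltNge ltr0n.
have s2 J : s J * s J = (class_size J)%:R by rewrite -expr2 sqr_sqrtr ?ler0n.
pose S := diag_mx (\row_J s J); pose Si := diag_mx (\row_J (s J)^-1).
pose Dn := diag_mx (\row_u (x - d (cls u))).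
pose Dni := diag_mx (\row_u (x - d (cls u))^-1).
pose Dm := diag_mx (\row_J (x - d J)); pose Dmi := diag_mx (\row_J (x - d J)^-1).
pose F := P *m Si; pose H := S *m G *m S.
have eM : x%:M - inflate_mx = Dn - F *m (H *m F^T).
  rewrite /inflate_mx opprD addrA scalar_sub_diag_mx -class_incidence_conj.
  rewrite /F /H trmx_mul tr_diag_mx -!mulmxA (mulmxA Si S).
  rewrite diag_mx_mulVf // mul1mx (mulmxA S Si) diag_mx_divff // mul1mx.
  by rewrite !mulmxA.
have eK : F^T *m (Dni *m F) = Dmi.
  rewrite /F trmx_mul tr_diag_mx !mulmxA -2!(mulmxA Si).
  rewrite (class_incidence_diag (fun J => (x - d J)^-1)).
  rewrite !diag_mxM; congr diag_mx; apply/rowP => J; rewrite !mxE -s2.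
  by field; rewrite s_neq0 xd_neq0.
have eQ : Dm - H = x%:M - quotient_mx.
  by rewrite /quotient_mx opprD addrA scalar_sub_diag_mx.
rewrite hornerM horner_prod !horner_char_poly eM.
rewrite (det_schur _ _ (diag_mx_divff _)) // -2!mulmxA eK.
rewrite -(diag_mx_divff xd_neq0) -mulmxBl det_mulmx eQ !det_diag.
under eq_bigr do rewrite mxE.
rewrite (prod_class (fun J => x - d J)) mulrCA mulrC; congr (_ * _).
rewrite -big_split /=.
apply: eq_bigr => J _; rewrite !mxE horner_exp hornerXsubC.
by rewrite -{1}(subnK (class_size_gt0 J)) addn1 exprS mulrC mulKf.
Qed.
End Inflation.

Section GraphJoin.
Variables (R : rcfType) (T S : finType) (V : {set T}) (W : {set S}).
Variables (adj : rel T) (h : rel S) (f : T -> S) (c : S -> nat).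
Hypothesis f_in : {in V, forall u, f u \in W}.
Hypothesis adj_f : {in V &, forall u v, adj u v = h (f u) (f v)}.
Hypothesis card_fibre : {in W, forall J, #|[set u in V | f u == J]| = c J}.
Hypothesis c_gt0 : {in W, forall J, 0 < c J}%N.

Definition join_deg J := (\sum_(K in W | h J K) c K)%N.

Definition lap_quotient : 'M[R]_#|W| := \matrix_(I, J)
  ((I == J)%:R * (join_deg (vtx I))%:R
   - (h (vtx I) (vtx J))%:R * Num.sqrt ((c (vtx I))%:R * (c (vtx J))%:R)).

Definition slap_quotient : 'M[R]_#|W| := \matrix_(I, J)
  ((I == J)%:R * (join_deg (vtx I))%:R
   + (h (vtx I) (vtx J))%:R * Num.sqrt ((c (vtx I))%:R * (c (vtx J))%:R)).

Definition nlap_quotient : 'M[R]_#|W| := \matrix_(I, J)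
  ((I == J)%:R - (h (vtx I) (vtx J))%:R *
     Num.sqrt ((c (vtx I))%:R * (c (vtx J))%:R
               / ((join_deg (vtx I))%:R * (join_deg (vtx J))%:R))).

Let cls (u : 'I_#|V|) : 'I_#|W| := enum_rank_in (f_in (enum_valP u)) (f (vtx u)).

Lemma vtx_cls u : vtx (cls u) = f (vtx u).
Proof. by rewrite /cls /vtx enum_rankK_in ?f_in ?enum_valP. Qed.

Lemma class_size_cls J : class_size cls J = c (vtx J).
Proof.
have -> : c (vtx J) = (\sum_(u in V | f u == vtx J) 1)%N.
  by rewrite sum1dep_card -card_fibre ?enum_valP //; apply: eq_card => u; rewrite !inE.
rewrite big_enum_val_cond sum1dep_card; apply: eq_card => u.
by rewrite !inE -vtx_cls (inj_eq enum_val_inj).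
Qed.

Lemma adjmx_cls u v : adjmx R V adj u v = (h (vtx (cls u)) (vtx (cls v)))%:R.
Proof. by rewrite mxE !vtx_cls adj_f ?enum_valP. Qed.

Lemma deg_cls u : deg R adj u = (join_deg (vtx (cls u)))%:R.
Proof.
rewrite /deg; under eq_bigr do rewrite adjmx_cls.
rewrite (sum_class cls (fun J => (h (vtx (cls u)) (vtx J))%:R)) /join_deg.
rewrite natr_sum big_mkcondr [RHS]big_enum_val; apply: eq_bigr => J _.
by rewrite class_size_cls; case: (h _ _); rewrite ?mulr1 ?mulr0.
Qed.

Lemma char_poly_inflate_join (d : S -> R) (g : S -> S -> R) :
  char_poly (inflate_mx cls (fun J => d (vtx J)) (\matrix_(I, J) g (vtx I) (vtx J))) =
  \prod_(J in W) ('X - (d J)%:P) ^+ (c J - 1) *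
  char_poly (\matrix_(I, J) ((I == J)%:R * d (vtx I)
     + Num.sqrt ((c (vtx I))%:R * (c (vtx J))%:R) * g (vtx I) (vtx J)) : 'M[R]_#|W|).
Proof.
rewrite char_poly_inflate => [|J]; last by rewrite class_size_cls c_gt0 ?enum_valP.
rewrite [in RHS]big_enum_val; congr (_ * _).
  by apply: eq_bigr => J _; rewrite class_size_cls.
congr char_poly; apply/matrixP => I J.
by rewrite quotient_mxE !mxE !class_size_cls sqrtrM ?ler0n // mulrAC.
Qed.

Theorem char_poly_lapmx_join :
  char_poly (lapmx R V adj) =
  \prod_(J in W) ('X - (join_deg J)%:R%:P) ^+ (c J - 1) * char_poly lap_quotient.
Proof.
have -> : lapmx R V adj = inflate_mx cls (fun J => (join_deg (vtx J))%:R)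
                            (\matrix_(I, J) - (h (vtx I) (vtx J))%:R).
  by apply/matrixP => u v; rewrite !mxE deg_cls adj_f ?enum_valP // -!vtx_cls mulr_natl.
rewrite (char_poly_inflate_join (fun J => (join_deg J)%:R) (fun I J => - (h I J)%:R)).
by congr (_ * char_poly _); apply/matrixP => I J; rewrite !mxE; ring.
Qed.

Theorem char_poly_slapmx_join :
  char_poly (slapmx R V adj) =
  \prod_(J in W) ('X - (join_deg J)%:R%:P) ^+ (c J - 1) * char_poly slap_quotient.
Proof.
have -> : slapmx R V adj = inflate_mx cls (fun J => (join_deg (vtx J))%:R)
                             (\matrix_(I, J) (h (vtx I) (vtx J))%:R).
  by apply/matrixP => u v; rewrite !mxE deg_cls adj_f ?enum_valP // -!vtx_cls mulr_natl.
rewrite (char_poly_inflate_join (fun J => (join_deg J)%:R) (fun I J => (h I J)%:R)).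
by congr (_ * char_poly _); apply/matrixP => I J; rewrite !mxE; ring.
Qed.

Hypothesis join_deg_gt0 : {in W, forall J, 0 < join_deg J}%N.

Theorem char_poly_nlapmx_join :
  char_poly (nlapmx R V adj) =
  ('X - 1) ^+ (\sum_(J in W) (c J - 1)) * char_poly nlap_quotient.
Proof.
pose sd J : R := Num.sqrt (join_deg J)%:R.
have sd_neq0 J : J \in W -> sd J != 0.
  by move=> JW; rewrite sqrtr_eq0 -ltNge ltr0n join_deg_gt0.
have sd2 J : sd J * sd J = (join_deg J)%:R by rewrite -expr2 sqr_sqrtr ?ler0n.
have -> : nlapmx R V adj = inflate_mx cls (fun=> 1)
    (\matrix_(I, J) (- (h (vtx I) (vtx J))%:R / (sd (vtx I) * sd (vtx J)))).
  rewrite /nlapmx.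
  have -> : degmx_isqrt R V adj = diag_mx (\row_u (Num.sqrt (deg R adj u))^-1).
    by apply/matrixP => u v; rewrite !mxE mulr_natl.
  apply/matrixP => u v; rewrite mul_diag_mx mul_mx_diag !mxE !deg_cls.
  rewrite adj_f ?enum_valP // -!vtx_cls -!/(sd _).
  have := sd_neq0 _ (enum_valP (cls u)); have := sd_neq0 _ (enum_valP (cls v)).
  set a := (h _ _)%:R.
  have [<-|neq] := eqVneq u v => ? ?; rewrite ?eqxx ?(negPf neq) /= ?mulr1n ?mulr0n.
    by rewrite mul1r -sd2; field.
  by rewrite mul0r; field; apply/andP.
apply: etrans
  (char_poly_inflate_join (fun=> 1) (fun I J => - (h I J)%:R / (sd I * sd J))) _.
rewrite prodrXr polyC1; congr (_ * char_poly _); apply/matrixP => I J.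
have := sd_neq0 _ (enum_valP I); have := sd_neq0 _ (enum_valP J).
rewrite !mxE [in RHS]sqrtrM ?mulr_ge0 ?ler0n // sqrtrV ?mulr_ge0 ?ler0n //.
rewrite (@sqrtrM _ (join_deg (vtx I))%:R) ?ler0n // -/(sd _) -/(sd _).
set a := (h _ _)%:R.
by move=> ? ?; field; apply/andP.
Qed.

End GraphJoin.

Lemma card_ord_ltn N c : (c <= N)%N -> #|[set a : 'I_N | (a < c)%N]| = c.
Proof.
move=> le_cN; rewrite -sum1dep_card -(big_ord_widen _ (fun=> 1%N) le_cN).
by rewrite sum1_card card_ord.
Qed.

Section IdealClasses.
Variables (k : nat) (m : 'I_k -> nat).
Hypothesis m_gt0 : forall i, (0 < m i)%N.

Lemma m_le_Mx i : (m i <= Mx m)%N.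
Proof. exact: leq_bigmax. Qed.

Definition ideal_of_set (A : {set 'I_k}) : expv m :=
  [ffun i => if i \in A then inord (m i) else ord0].

Lemma ideal_of_setE A i : (ideal_of_set A i : nat) = if i \in A then m i else 0%N.
Proof. by rewrite ffunE; case: ifP => // _; rewrite inordK // ltnS m_le_Mx. Qed.

Lemma Xi_ideal_of_set A : Xi m (ideal_of_set A) = A.
Proof.
apply/setP => i; rewrite inE ideal_of_setE.
by case: ifP; rewrite ?eqxx // eq_sym gtn_eqF.
Qed.

Lemma essentialE (r : expv m) : essential r = (Xi m r == set0).
Proof.
apply/forallP/eqP => [r_ess|Xi0 j].
  by apply/setP => j; rewrite !inE (negPf (r_ess j)).
by move: Xi0 => /setP/(_ j); rewrite !inE => ->.
Qed.

Lemma UsetE (r : expv m) :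
  (r \in Uset m) = [&& is_ideal r, Xi m r != set0 & Xi m r != setT].
Proof.
rewrite inE /nonzero_proper essentialE.
have -> : [forall i, (r i : nat) == m i] = (Xi m r == setT).
  apply/forallP/eqP => [r_full|Xi_full i].
    by apply/setP => i; rewrite !inE r_full.
  by move: Xi_full => /setP/(_ i); rewrite !inE.
have [->|/set0Pn[i]] := eqVneq (Xi m r) set0; first by rewrite /= !andbF.
rewrite inE => /eqP r_i; have r_nz : ~~ [forall i, (r i : nat) == 0%N].
  by apply/forallPn; exists i; rewrite r_i -lt0n.
by rewrite r_nz andbT.
Qed.

Lemma VG_E (r : expv m) :
  (r \in VG m) = (r \in Uset m) && (r == ideal_of_set (Xi m r)).
Proof.
rewrite inE; congr andb; apply/forallP/eqP => [r01|r_eq i]; last first.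
  by rewrite r_eq ideal_of_setE; case: ifP; rewrite eqxx ?orbT.
apply/ffunP => i; apply/val_inj; rewrite /= ideal_of_setE inE.
by case: eqP => // ne; case/orP: (r01 i) => /eqP.
Qed.

Lemma ideal_of_set_VG A :
  A != set0 -> A != setT -> ideal_of_set A \in VG m.
Proof.
move=> A_neq0 A_neqT; rewrite VG_E UsetE Xi_ideal_of_set A_neq0 A_neqT eqxx !andbT.
by apply/forallP => i; rewrite ideal_of_setE; case: ifP.
Qed.

Lemma VG_Uset : {subset VG m <= Uset m}.
Proof. by move=> r; rewrite VG_E => /andP[]. Qed.

Definition class_rep (r : expv m) : expv m := ideal_of_set (Xi m r).

Lemma class_rep_VG r : r \in Uset m -> class_rep r \in VG m.
Proof. by rewrite UsetE => /and3P[_ ? ?]; apply: ideal_of_set_VG. Qed.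

Lemma class_rep_eq r J : J \in VG m -> (class_rep r == J) = (Xi m r == Xi m J).
Proof.
rewrite VG_E => /andP[_ /eqP J_eq].
by rewrite /class_rep [in LHS]J_eq (can_eq Xi_ideal_of_set).
Qed.

Lemma Xi_idsum (r s : expv m) :
  is_ideal r -> is_ideal s -> Xi m (idsum r s) = Xi m r :&: Xi m s.
Proof.
move=> /forallP r_le /forallP s_le; apply/setP => i; rewrite !inE ffunE.
have := r_le i; have := s_le i.
by case: (leqP (r i) (s i)) => ? ? ?; apply/idP/idP; lia.
Qed.

Lemma disjoint_Xi_id r : r \in Uset m -> [disjoint Xi m r & Xi m r] = false.
Proof. by rewrite UsetE -setI_eq0 setIid => /and3P[_ /negPf]. Qed.

Lemma adjE_Uset r s : r \in Uset m -> s \in Uset m ->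
  adjE m r s = [disjoint Xi m r & Xi m s].
Proof.
move=> r_U s_U; move: (r_U) (s_U); rewrite !UsetE => /and3P[r_id _ _] /and3P[s_id _ _].
rewrite /adjE essentialE Xi_idsum // setI_eq0.
by case: eqVneq => [<-|//]; rewrite disjoint_Xi_id.
Qed.

Lemma card_class_rep_fibre J : J \in VG m ->
  #|[set r in Uset m | class_rep r == J]| = nI m J.
Proof.
move=> J_VG; have J_U : J \in Uset m by move: J_VG; rewrite VG_E => /andP[].
pose F i := if i \in Xi m J then [set J i] else [set a : 'I_(Mx m).+1 | a < m i]%N.
have memF r i :
    (r i \in F i) = if i \in Xi m J then (r i : nat) == m i else (r i < m i)%N.
  rewrite /F; case: ifPn => [|_]; last by rewrite inE.
  by rewrite !inE => /eqP <-.
have fibreE : [set r in Uset m | class_rep r == J] =i family F.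
  move=> r; rewrite inE class_rep_eq // UsetE; apply/idP/familyP => [|r_F].
    case/andP => /and3P[/forallP r_le _ _] /eqP XiE i; rewrite memF -XiE inE.
    by case: eqP => // r_nfull; rewrite ltn_neqAle r_le andbT; apply/eqP.
  have XiE : Xi m r = Xi m J.
    apply/setP => i; have := r_F i; rewrite memF [i \in Xi m r]inE.
    by case: ifP => _; [move=> -> | move/ltn_eqF].
  move: J_U; rewrite UsetE XiE eqxx => /and3P[_ -> ->]; rewrite !andbT.
  apply/forallP => i; have := r_F i; rewrite memF.
  by case: ifP => _; [move/eqP-> | exact: ltnW].
rewrite (eq_card fibreE) card_family foldrE big_image /nI [RHS]big_mkcond.
apply: eq_bigr => i _; rewrite /F; case: ifP => _; first by rewrite cards1.
by rewrite card_ord_ltn // leqW // m_le_Mx.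
Qed.

Lemma nI_gt0 r : (0 < nI m r)%N.
Proof. exact: prodn_gt0. Qed.

Lemma NI_gt0 J : J \in VG m -> (0 < NI m J)%N.
Proof.
rewrite VG_E UsetE => /andP[/and3P[_ J_neq0 J_neqT] _].
pose J' := ideal_of_set (~: Xi m J).
have J'_VG : J' \in VG m.
  apply: ideal_of_set_VG; first by rewrite -setCT (inj_eq (@setC_inj _)).
  by rewrite -setC0 (inj_eq (@setC_inj _)).
rewrite /NI (bigD1 J') /=; first by rewrite addn_gt0 nI_gt0.
by rewrite J'_VG Xi_ideal_of_set disjoints_subset setCK subxx.
Qed.

Definition adjG : rel (expv m) := fun I J => [disjoint Xi m I & Xi m J].

Lemma adjE_class_rep : {in Uset m &, forall r s,
  adjE m r s = adjG (class_rep r) (class_rep s)}.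
Proof. by move=> r s r_U s_U; rewrite /adjG !Xi_ideal_of_set adjE_Uset. Qed.

Section QuotientMatrices.
Variable R : rcfType.

Lemma CL_lap_quotient : CL m R = lap_quotient R (VG m) adjG (nI m).
Proof.
apply/matrixP => i j; rewrite !mxE; have [<-|ne] := eqVneq i j.
  by rewrite /adjG disjoint_Xi_id ?VG_Uset ?enum_valP // mul1r mul0r subr0.
by rewrite mul0r sub0r /adjG; case: ifP; rewrite ?mul1r ?mul0r ?oppr0.
Qed.

Lemma CQ_slap_quotient : CQ m R = slap_quotient R (VG m) adjG (nI m).
Proof.
apply/matrixP => i j; rewrite !mxE; have [<-|ne] := eqVneq i j.
  by rewrite /adjG disjoint_Xi_id ?VG_Uset ?enum_valP // mul1r mul0r addr0.
by rewrite mul0r add0r /adjG; case: ifP; rewrite ?mul1r ?mul0r.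
Qed.

Lemma CNL_nlap_quotient : CNL m R = nlap_quotient R (VG m) adjG (nI m).
Proof.
apply/matrixP => i j; rewrite !mxE; have [<-|ne] := eqVneq i j.
  by rewrite /adjG disjoint_Xi_id ?VG_Uset ?enum_valP // mul0r subr0.
by rewrite sub0r /adjG; case: ifP; rewrite ?mul1r ?mul0r ?oppr0.
Qed.

End QuotientMatrices.

End IdealClasses.

Unset Implicit Arguments.
Theorem mainTheorem9 (R : rcfType) (k : nat) (p m : 'I_k -> nat)
  (hp : forall i, prime (p i))
  (hinc : forall i j : 'I_k, (i < j)%N -> (p i < p j)%N)
  (hm : forall i, (0 < m i)%N)
  (hm1 : exists i, (1 < m i)%N) :
  [/\ char_poly (lapmx R (Uset m) (adjE m)) =
        (\prod_(I in VG m) ('X - ((NI m I)%:R)%:P) ^+ (nI m I - 1)) * char_poly (CL m R),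
      char_poly (slapmx R (Uset m) (adjE m)) =
        (\prod_(I in VG m) ('X - ((NI m I)%:R)%:P) ^+ (nI m I - 1)) * char_poly (CQ m R)
    & char_poly (nlapmx R (Uset m) (adjE m)) =
        ('X - 1) ^+ (\sum_(I in VG m) (nI m I - 1)) * char_poly (CNL m R)].
Proof.
have rep_VG : {in Uset m, forall r, class_rep r \in VG m} := class_rep_VG hm.
have adj_rep := adjE_class_rep hm.
have card_fibre := card_class_rep_fibre hm.
have nI_pos : {in VG m, forall J, 0 < nI m J}%N by move=> J _; exact: nI_gt0.
split.
- rewrite (char_poly_lapmx_join R rep_VG adj_rep card_fibre nI_pos).
  by rewrite CL_lap_quotient.
- rewrite (char_poly_slapmx_join R rep_VG adj_rep card_fibre nI_pos).
  by rewrite CQ_slap_quotient.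
- rewrite (char_poly_nlapmx_join R rep_VG adj_rep card_fibre nI_pos (NI_gt0 hm)).
  by rewrite CNL_nlap_quotient.
Qed.
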